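(* Let $X_1$ and $X_2$ be two elliptic ovoids of $Q_0$ which are tangent, and let $x\in X_1\setminus X_2$. Then there exists a unique elliptic ovoid of $Q_0$ containing $x$ which is tangent to both $X_1$ and $X_2$.
   Context: Let $q=2^n$ and let $Q_0\cong Q(4,q)$ be the parabolic quadric generalized quadrangle in $\mathrm{PG}(4,q)$. An elliptic ovoid of $Q_0$ is a set $X=S\cap Q_0$ where $S$ is a $3$-dimensional projective subspace meeting $Q_0$ in an elliptic quadric $Q^-(3,q)$. Two distinct elliptic ovoids meet either in exactly one point (then they are called tangent) or in a non-degenerate conic. *)

From HB Require Import structures.
From mathcomp Require Import all_boot all_order all_algebra all_field.
Set Implicit Arguments. Unset Strict Implicit. Unset Printing Implicit Defensive.
Import GRing.Theory.
Local Open Scope ring_scope.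

Definition crd (F : fieldType) (v : 'rV[F]_5) (i : nat) : F := v 0 (inord i).
Definition crd4 (F : fieldType) (y : 'rV[F]_4) (i : nat) : F := y 0 (inord i).

(* Projective points of PG(4,F) are represented by their canonical
   representative: the nonzero vector whose first nonzero coordinate is 1. *)
Definition normalized (F : fieldType) (v : 'rV[F]_5) : bool :=
  [exists i : 'I_5, (v 0 i == 1) && [forall j : 'I_5, (j < i)%N ==> (v 0 j == 0)]].

Definition Qform (F : fieldType) (v : 'rV[F]_5) : F :=
  crd v 0 ^+ 2 + crd v 1 * crd v 2 + crd v 3 * crd v 4.

Definition Q0 (F : finFieldType) : {set 'rV[F]_5} :=
  [set v | normalized v && (Qform v == 0)].

(* X is an elliptic ovoid of Q_0: X = S ∩ Q_0, where S is a solid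
   (3-dimensional projective subspace), given as the row space of a 4x5
   matrix phi of rank 4, such that the restriction of Q to S is, in the
   coordinates given by phi, the canonical elliptic form
   y0 y1 + y2^2 + y2 y3 + d y3^2 with t^2 + t + d irreducible over F,
   i.e. S ∩ Q_0 is an elliptic quadric Q^-(3,q). *)
Definition elliptic_ovoid (F : finFieldType) (X : {set 'rV[F]_5}) : Prop :=
  exists (phi : 'M[F]_(4, 5)) (d : F),
    [/\ \rank phi = 4%N,
        (forall t : F, t ^+ 2 + t + d != 0),
        (forall y : 'rV[F]_4,
            Qform (y *m phi) =
              crd4 y 0 * crd4 y 1 + crd4 y 2 ^+ 2 + crd4 y 2 * crd4 y 3
              + d * crd4 y 3 ^+ 2)
      & X = [set v in Q0 F | (v <= phi)%MS]].

Definition tangent (F : finFieldType) (X Y : {set 'rV[F]_5}) : Prop :=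
  #|X :&: Y| = 1%N.

From HB Require Import structures.
From mathcomp Require Import all_boot all_order all_algebra all_field.
From mathcomp Require Import ring.
Import GRing.Theory.
Local Open Scope ring_scope.
Set Implicit Arguments. Unset Strict Implicit. Unset Printing Implicit Defensive.

(* In characteristic 2 the polar form B of Q is alternating with radical the
   nucleus N = e_0, and every elliptic ovoid is Q_0 cut by a hyperplane h.v = 0
   not through N, which we normalize by h_0 = 1.  If two such ovoids, with
   hyperplanes a and b, meet only in r, then b = a + k B(r,-) with k <> 0.
   Hence an ovoid through x tangent to X1 = {h1.v = 0} has equation
   h1 + k B(x,-); if it is also tangent at r' to X2 = {g2.v = 0}, where
   g2 = h1 + m B(p,-), then k x - m p - k' r' lies in the radical, and comparing
   its Q-value with its N-coordinate forces k = 1/(g2.x): uniqueness.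
   Conversely, the transvection v |-> v + B(v,W) W with W = N + x/(g2.x) is an
   isometry fixing g2 and pulling the solid of X1 back to the solid
   h1 + B(x,-)/(g2.x), so the candidate is an elliptic ovoid tangent to both. *)

Definition dot (F : fieldType) n (u v : 'rV[F]_n) : F := \sum_(i < n) u 0 i * v 0 i.

Section Dot.
Variables (F : fieldType) (n : nat).
Implicit Types u v w : 'rV[F]_n.

Lemma dotC u v : dot u v = dot v u.
Proof. by apply: eq_bigr => i _; rewrite mulrC. Qed.

Lemma dotDr u v w : dot u (v + w) = dot u v + dot u w.
Proof. by rewrite /dot -big_split; apply: eq_bigr => i _; rewrite mxE mulrDr. Qed.

Lemma dotZr a u v : dot u (a *: v) = a * dot u v.
Proof. by rewrite /dot mulr_sumr; apply: eq_bigr => i _; rewrite mxE mulrCA. Qed.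

Lemma dotBr u v w : dot u (v - w) = dot u v - dot u w.
Proof. by rewrite dotDr -scaleN1r dotZr mulN1r. Qed.

Lemma dotDl u v w : dot (u + v) w = dot u w + dot v w.
Proof. by rewrite !(dotC _ w) dotDr. Qed.

Lemma dotZl a u v : dot (a *: u) v = a * dot u v.
Proof. by rewrite !(dotC _ v) dotZr. Qed.

Lemma dotBl u v w : dot (u - v) w = dot u w - dot v w.
Proof. by rewrite !(dotC _ w) dotBr. Qed.

Lemma dot_delta u j : dot u (delta_mx 0 j) = u 0 j.
Proof.
rewrite /dot (bigD1 j) //= big1 ?addr0; first by rewrite mxE !eqxx mulr1.
by move=> i /negbTE ji; rewrite mxE ji andbF mulr0.
Qed.

Lemma dot0l v : dot 0 v = 0.
Proof. by rewrite -(scale0r 0) dotZl mul0r. Qed.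

Lemma dot_ker_scale g j :
  (forall v, dot g v = 0 -> dot j v = 0) -> exists beta, j = beta *: g.
Proof.
move=> gj; case: (pickP (fun i => g 0 i != 0)) => [i gi | g0].
  exists (j 0 i / g 0 i); apply/rowP => l; rewrite mxE.
  have := gj (g 0 i *: delta_mx 0 l - g 0 l *: delta_mx 0 i).
  rewrite !(dotBr, dotZr, dot_delta) mulrC subrr => /(_ erefl) /eqP.
  rewrite subr_eq0 => /eqP jgl; apply: (mulfI gi).
  by rewrite jgl; field.
exists 0; apply/rowP => l; rewrite scale0r mxE -dot_delta; apply: gj.
suff -> : g = 0 by rewrite dot0l.
by apply/rowP => i; rewrite mxE; apply/eqP/negbFE/g0.
Qed.

Lemma rank_hyperplane m (phi : 'M[F]_(m, n.+1)) : \rank phi = n ->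
  exists2 h, h != 0 & forall v : 'rV_n.+1, (v <= phi)%MS = (dot h v == 0).
Proof.
move=> rk.
have rK : \rank (cokermx phi) = 1%N by rewrite mxrank_coker rk subSnn.
have [j Kj] : exists j, col j (cokermx phi) != 0.
  case: (pickP (fun j => col j (cokermx phi) != 0)) => [j hj|K0]; first by exists j.
  suff K0' : cokermx phi = 0 by move: rK; rewrite K0' mxrank0.
  apply/matrixP => i j; have /negbFE/eqP/matrixP/(_ i 0) := K0 j.
  by rewrite !mxE.
set c := col j (cokermx phi).
have phic : phi *m c = 0 by rewrite /c colE mulmxA mulmx_coker mul0mx.
have rc : \rank c = 1%N by apply/eqP; rewrite eqn_leq rank_leq_col lt0n mxrank_eq0.
have phiK : (phi == kermx c)%MS.
  rewrite -(mxrank_leqif_eq _).2 ?sub_kermx ?phic //.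
  by rewrite rk mxrank_ker rc subn1.
exists c^T; first by rewrite trmx_eq0.
move=> v; rewrite (eqmxP phiK) sub_kermx.
have -> : dot c^T v = (v *m c) 0 0.
  by rewrite mxE; apply: eq_bigr => i _; rewrite !mxE mulrC.
apply/eqP/eqP => [->|vc0]; first by rewrite mxE.
by rewrite [v *m c]mx11_scalar vc0 raddf0.
Qed.

End Dot.

Section Coordinates.
Variable F : fieldType.
Implicit Types u v w : 'rV[F]_5.

Lemma crdD u v i : crd (u + v) i = crd u i + crd v i.
Proof. by rewrite /crd mxE. Qed.
Lemma crdZ a u i : crd (a *: u) i = a * crd u i.
Proof. by rewrite /crd mxE. Qed.
Lemma crdB u v i : crd (u - v) i = crd u i - crd v i.
Proof. by rewrite /crd !mxE. Qed.

Lemma crd4D (y z : 'rV[F]_4) i : crd4 (y + z) i = crd4 y i + crd4 z i.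
Proof. by rewrite /crd4 mxE. Qed.
Lemma crd4Z a (y : 'rV[F]_4) i : crd4 (a *: y) i = a * crd4 y i.
Proof. by rewrite /crd4 mxE. Qed.

Lemma crd_delta k i : (k < 5)%N -> (i < 5)%N ->
  crd (delta_mx 0 (inord k) : 'rV[F]_5) i = (i == k)%:R.
Proof. by move=> k5 i5; rewrite /crd mxE eqxx -val_eqE /= !inordK. Qed.

Lemma crd4_delta k i : (k < 4)%N -> (i < 4)%N ->
  crd4 (delta_mx 0 (inord k) : 'rV[F]_4) i = (i == k)%:R.
Proof. by move=> k4 i4; rewrite /crd4 mxE eqxx -val_eqE /= !inordK. Qed.

Lemma row5_eq u v :
  crd u 0 = crd v 0 -> crd u 1 = crd v 1 -> crd u 2 = crd v 2 ->
  crd u 3 = crd v 3 -> crd u 4 = crd v 4 -> u = v.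
Proof.
move=> h0 h1 h2 h3 h4; apply/rowP => j; rewrite -[j]inord_val.
by case: j => [[|[|[|[|[|k]]]]] jlt].
Qed.

Lemma row4_eq (y z : 'rV[F]_4) :
  crd4 y 0 = crd4 z 0 -> crd4 y 1 = crd4 z 1 -> crd4 y 2 = crd4 z 2 ->
  crd4 y 3 = crd4 z 3 -> y = z.
Proof.
move=> h0 h1 h2 h3; apply/rowP => j; rewrite -[j]inord_val.
by case: j => [[|[|[|[|k]]]] jlt].
Qed.

Lemma dot_crd u v : dot u v =
  crd u 0 * crd v 0 + crd u 1 * crd v 1 + crd u 2 * crd v 2
  + crd u 3 * crd v 3 + crd u 4 * crd v 4.
Proof.
have E (w : 'rV[F]_5) j : w 0 j = crd w j by rewrite /crd inord_val.
by rewrite /dot !big_ord_recl big_ord0 !E /=; ring.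
Qed.

End Coordinates.

(* The polar form of [Qform] in characteristic 2. *)
Definition polar (F : fieldType) (u v : 'rV[F]_5) : F :=
  crd u 1 * crd v 2 + crd u 2 * crd v 1 + crd u 3 * crd v 4 + crd u 4 * crd v 3.

Definition nucleus (F : fieldType) : 'rV[F]_5 := delta_mx 0 (inord 0).

Definition polarv (F : fieldType) (u : 'rV[F]_5) : 'rV[F]_5 :=
  \row_j polar u (delta_mx 0 j).

Section Quadric.
Variable F : fieldType.
Hypothesis F2 : 2%N \in [pchar F].
Implicit Types u v w z h : 'rV[F]_5.

Lemma QformD u v : Qform (u + v) = Qform u + Qform v + polar u v.
Proof. by rewrite /Qform /polar !crdD; ring: (pcharf0 F2). Qed.
Lemma QformZ a u : Qform (a *: u) = a ^+ 2 * Qform u.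
Proof. by rewrite /Qform !crdZ; ring. Qed.

Lemma polarC u v : polar u v = polar v u.
Proof. by rewrite /polar; ring. Qed.
Lemma polarZl a u w : polar (a *: u) w = a * polar u w.
Proof. by rewrite /polar !crdZ; ring. Qed.
Lemma polarBl u v w : polar (u - v) w = polar u w - polar v w.
Proof. by rewrite /polar !crdB; ring. Qed.
Lemma polarZr a u w : polar w (a *: u) = a * polar w u.
Proof. by rewrite polarC polarZl polarC. Qed.
Lemma polarBr u v w : polar w (u - v) = polar w u - polar w v.
Proof. by rewrite polarC polarBl !(polarC w). Qed.
Lemma QformB u v : Qform (u - v) = Qform u + Qform v - polar u v.
Proof. by rewrite QformD -scaleN1r QformZ polarZr; ring. Qed.
Lemma polarvv u : polar u u = 0.
Proof. by rewrite /polar; ring: (pcharf0 F2). Qed.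

Lemma crd_nucleus i : (i < 5)%N -> crd (nucleus F) i = (i == 0%N)%:R.
Proof. exact: crd_delta. Qed.

Lemma Qform_nucleus : Qform (nucleus F) = 1.
Proof. by rewrite /Qform !crd_nucleus //=; ring. Qed.
Lemma polar_nucleus v : polar v (nucleus F) = 0.
Proof. by rewrite /polar !crd_nucleus //=; ring. Qed.
Lemma dot_nucleus h : dot h (nucleus F) = crd h 0.
Proof. by rewrite dot_crd !crd_nucleus //=; ring. Qed.

Lemma dot_polarv u v : dot (polarv u) v = polar u v.
Proof.
have E i : crd (polarv u) i = polar u (delta_mx 0 (inord i)) by rewrite /crd mxE.
by rewrite dot_crd !E /polar !crd_delta //=; ring.
Qed.

Lemma polar_radical z : (forall v, polar z v = 0) -> z = crd z 0 *: nucleus F.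
Proof.
move=> zrad.
have e k : (k < 5)%N -> polar z (delta_mx 0 (inord k)) = 0 by [].
have := e 1%N isT; have := e 2%N isT; have := e 3%N isT; have := e 4%N isT.
rewrite /polar !crd_delta //= !(mulr0, mulr1, addr0, add0r) => z3 z4 z1 z2.
by apply: row5_eq; rewrite crdZ crd_nucleus //= ?mulr1 ?mulr0.
Qed.

Lemma radical_in_hyperplane h z : crd h 0 = 1 -> dot h z = 0 ->
  (forall v, polar z v = 0) -> z = 0.
Proof.
move=> h0 + /polar_radical zE; rewrite zE dotZr dot_nucleus h0 mulr1 => ->.
by rewrite scale0r.
Qed.

(* [z] is a multiple of the nucleus, so [Qform z = (crd z 0)^2] and
   [dot g z = crd z 0]; both turn out to equal [k * dot g x]. *)
Lemma radical_comb_eq1 g x p r k m k' : crd g 0 = 1 ->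
  Qform x = 0 -> Qform p = 0 -> Qform r = 0 -> dot g p = 0 -> dot g r = 0 ->
  (forall v, polar (k *: x - m *: p - k' *: r) v = 0) ->
  k * dot g x != 0 -> dot g x = m * polar p x -> k * dot g x = 1.
Proof.
set z := k *: x - m *: p - k' *: r => g0 xS pS rS gp gr zrad kt0 tE.
have z0 : crd z 0 = k * dot g x.
  have := congr1 (dot g) (polar_radical zrad).
  rewrite dotZr dot_nucleus g0 mulr1 => <-.
  by rewrite !dotBr !dotZr gp gr; ring.
have Qz : Qform z = k * dot g x.
  have := zrad x; have := zrad p.
  rewrite /z !(polarBl, polarZl) !polarvv // (polarC r x) (polarC r p) !mulr0.
  rewrite subr0 sub0r => /subr0_eq zp /subr0_eq zx.
  rewrite /z !QformB // !QformZ xS pS rS !(polarBl, polarZl, polarZr) tE.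
  transitivity (k * (m * polar x p) - k * (k' * polar x r + m * polar p x)
    - m * (k * polar x p - k' * polar p r)); first by rewrite (polarC p x); ring.
  by rewrite -zx addNr zp subrr !mulr0 !subr0 (polarC p x).
apply: (mulfI kt0); rewrite mulr1 -expr2 -[RHS]Qz.
by rewrite {1}(polar_radical zrad) QformZ Qform_nucleus mulr1 z0.
Qed.

End Quadric.

Definition ell_form (F : fieldType) (d : F) (y : 'rV[F]_4) : F :=
  crd4 y 0 * crd4 y 1 + crd4 y 2 ^+ 2 + crd4 y 2 * crd4 y 3 + d * crd4 y 3 ^+ 2.

Definition ell_polar (F : fieldType) (y z : 'rV[F]_4) : F :=
  crd4 y 0 * crd4 z 1 + crd4 y 1 * crd4 z 0 + crd4 y 2 * crd4 z 3 + crd4 y 3 * crd4 z 2.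

Section EllipticForm.
Variables (F : fieldType) (d : F).
Hypothesis F2 : 2%N \in [pchar F].
Hypothesis d_irr : forall t : F, t ^+ 2 + t + d != 0.
Implicit Types y z w : 'rV[F]_4.

Lemma ell_formD y z : ell_form d (y + z) = ell_form d y + ell_form d z + ell_polar y z.
Proof. by rewrite /ell_form /ell_polar !crd4D; ring: (pcharf0 F2). Qed.

Lemma ell_formDZ y c w :
  ell_form d (y + c *: w) = ell_form d y + c ^+ 2 * ell_form d w + c * ell_polar y w.
Proof. by rewrite /ell_form /ell_polar !(crd4D, crd4Z); ring: (pcharf0 F2). Qed.

Lemma ell_polarDZl y c z w : ell_polar (y + c *: z) w = ell_polar y w + c * ell_polar z w.
Proof. by rewrite /ell_polar !(crd4D, crd4Z); ring. Qed.

Lemma ell_polarvv y : ell_polar y y = 0.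
Proof. by rewrite /ell_polar; ring: (pcharf0 F2). Qed.

Lemma binary_anisotropic a b : a ^+ 2 + a * b + d * b ^+ 2 = 0 -> a = 0 /\ b = 0.
Proof.
move=> ab0; have [b0 | bn0] := eqVneq b 0.
  by move: ab0; rewrite b0 expr0n !mulr0 !addr0 => /eqP; rewrite expf_eq0 => /eqP.
have /negP[] := d_irr (a / b); apply/eqP.
have -> : (a / b) ^+ 2 + a / b + d = (a ^+ 2 + a * b + d * b ^+ 2) / b ^+ 2 by field.
by rewrite ab0 mul0r.
Qed.

Lemma ell_singular_tail y : ell_form d y = 0 -> crd4 y 0 * crd4 y 1 = 0 ->
  crd4 y 2 = 0 /\ crd4 y 3 = 0.
Proof. by rewrite /ell_form => + y01; rewrite y01 add0r; apply: binary_anisotropic. Qed.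

Lemma ell_singular_orth_zero y w : ell_form d y = 0 -> ell_polar y w = 0 ->
  (crd4 y 0 = 0 /\ crd4 w 0 != 0) \/ (crd4 y 1 = 0 /\ crd4 w 1 != 0) -> y = 0.
Proof.
move=> yS yw yw01.
have [y2 y3] : crd4 y 2 = 0 /\ crd4 y 3 = 0.
  by apply: ell_singular_tail => //; case: yw01 => -[->]; rewrite ?mul0r ?mulr0.
move: yw; rewrite /ell_polar y2 y3 !mul0r !addr0.
have crd40 i : crd4 (0 : 'rV[F]_4) i = 0 by rewrite /crd4 mxE.
case: yw01 => -[yi wi]; rewrite yi !(mul0r, add0r, addr0) => /eqP;
  rewrite mulf_eq0 (negbTE wi) ?orbF => /eqP yj;
  by apply: row4_eq; rewrite crd40.
Qed.

Lemma ell_singular_orth y w : ell_form d y = 0 -> ell_form d w = 0 ->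
  ell_polar y w = 0 -> w != 0 -> exists c, y = c *: w.
Proof.
move=> yS wS yw wn0.
have zS c : ell_form d (y + c *: w) = 0 by rewrite ell_formDZ yS wS yw; ring.
have zw c : ell_polar (y + c *: w) w = 0 by rewrite ell_polarDZl yw ell_polarvv; ring.
have w01 : (crd4 w 0 != 0) || (crd4 w 1 != 0).
  apply: contraNT wn0 => /norP[/negbNE/eqP w0 /negbNE/eqP w1].
  have [w2 w3] : crd4 w 2 = 0 /\ crd4 w 3 = 0.
    by apply: ell_singular_tail; rewrite ?w0 ?mul0r.
  by apply/eqP; apply: row4_eq; rewrite /crd4 mxE.
case/orP: w01 => wi; [exists (crd4 y 0 / crd4 w 0) | exists (crd4 y 1 / crd4 w 1)];
  apply/eqP; rewrite -subr_eq0 -scaleNr; apply/eqP/(ell_singular_orth_zero (zS _) (zw _));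
  [left | right]; by rewrite crd4D crd4Z mulNr divfK ?subrr.
Qed.

Lemma ell_polar_nondeg y : (forall z, ell_polar y z = 0) -> y = 0.
Proof.
move=> yrad; have e k : (k < 4)%N -> ell_polar y (delta_mx 0 (inord k)) = 0 by [].
have := e 0%N isT; have := e 1%N isT; have := e 2%N isT; have := e 3%N isT.
rewrite /ell_polar !crd4_delta //= !(mulr0, mulr1, addr0, add0r) => y2 y3 y0 y1.
by apply: row4_eq; rewrite // /crd4 mxE.
Qed.

End EllipticForm.

Definition transvection (F : fieldType) (W : 'rV[F]_5) : 'M[F]_5 :=
  1%:M - (polarv W)^T *m W.

Section Transvection.
Variable F : fieldType.
Hypothesis F2 : 2%N \in [pchar F].
Variable W : 'rV[F]_5.
Hypothesis QW : Qform W = 1.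
Implicit Types v : 'rV[F]_5.

Lemma mul_transvection v : v *m transvection W = v - polar v W *: W.
Proof.
rewrite /transvection mulmxBr mulmx1 mulmxA [v *m _]mx11_scalar mul_scalar_mx.
congr (v - _ *: W); rewrite mxE polarC -dot_polarv.
by apply: eq_bigr => i _; rewrite !mxE mulrC.
Qed.

Lemma Qform_transvection v : Qform (v *m transvection W) = Qform v.
Proof. by rewrite mul_transvection QformB // QformZ QW polarZr; ring. Qed.

Lemma transvectionK v : v *m transvection W *m transvection W = v.
Proof.
rewrite !mul_transvection polarBl polarZl polarvv // mulr0 subr0.
by rewrite -addrA -opprD -scalerDl (addrr_pchar2 F2) scale0r subr0.
Qed.

Lemma transvection_invol : transvection W *m transvection W = 1%:M.
Proof.
apply/row_matrixP => i; have := transvectionK (row i 1%:M).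
by rewrite -!row_mul mul1mx.
Qed.

Lemma transvection_unit : transvection W \in unitmx.
Proof. by have [] := mulmx1_unit transvection_invol. Qed.

Lemma submx_transvection m (phi : 'M[F]_(m, 5)) v :
  (v <= phi *m transvection W)%MS = (v *m transvection W <= phi)%MS.
Proof.
apply/idP/idP => /(submxMr (transvection W)); last by rewrite transvectionK.
by rewrite -mulmxA transvection_invol mulmx1.
Qed.

End Transvection.

Definition ell_frame (F : fieldType) (phi : 'M[F]_(4, 5)) (d : F) :=
  forall y, Qform (y *m phi) = ell_form d y.

Section EllipticSolid.
Variables (F : fieldType) (phi : 'M[F]_(4, 5)) (d : F).
Hypothesis F2 : 2%N \in [pchar F].
Hypothesis frame : ell_frame phi d.

Lemma ell_frame_polar y z : polar (y *m phi) (z *m phi) = ell_polar y z.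
Proof.
have := frame (y + z); rewrite mulmxDl QformD // ell_formD // !frame.
exact: addrI.
Qed.

Lemma nucleus_notin_ell_frame : ~~ (nucleus F <= phi)%MS.
Proof.
apply/negP => /submxP[y Ny].
have y0 : y = 0.
  by apply: ell_polar_nondeg => z; rewrite -ell_frame_polar -Ny polarC polar_nucleus.
have := Qform_nucleus F; rewrite Ny frame y0 /ell_form /crd4 !mxE => e.
by have /eqP[] := oner_neq0 F; rewrite -e; ring.
Qed.

Lemma ell_frame_hyperplane : \rank phi = 4%N ->
  exists2 h, crd h 0 = 1 & forall v, (v <= phi)%MS = (dot h v == 0).
Proof.
move=> rk; have [h _ hE] := rank_hyperplane rk.
have := nucleus_notin_ell_frame; rewrite hE dot_nucleus => h0.
exists ((crd h 0)^-1 *: h) => [|v]; first by rewrite crdZ mulVf.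
by rewrite hE dotZl mulf_eq0 invr_eq0 (negbTE h0).
Qed.

Hypothesis d_irr : forall t : F, t ^+ 2 + t + d != 0.

Lemma ell_frame_cap v w : (v <= phi)%MS -> (w <= phi)%MS ->
  Qform v = 0 -> Qform w = 0 -> polar v w = 0 -> w != 0 -> exists c, v = c *: w.
Proof.
move=> /submxP[y ->] /submxP[z ->]; rewrite !frame ell_frame_polar => yS zS yz.
have [-> | zn0 _] := eqVneq z 0; first by rewrite mul0mx eqxx.
have [c ->] := ell_singular_orth F2 d_irr yS zS yz zn0.
by exists c; rewrite scalemxAl.
Qed.

End EllipticSolid.

Section Normalized.
Variable F : fieldType.
Implicit Types v w : 'rV[F]_5.

Lemma normalized_neq0 v : normalized v -> v != 0.
Proof.
case/existsP => i /andP[/eqP vi _]; apply: contra_eq_neq vi => ->.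
by rewrite mxE eq_sym oner_neq0.
Qed.

Lemma normalized_scale_eq v w c : normalized v -> normalized w -> v = c *: w -> v = w.
Proof.
case/existsP => i /andP[/eqP vi /forallP vlt]; case/existsP => k /andP[/eqP wk /forallP wlt].
move=> vE; have E j : v 0 j = c * w 0 j by rewrite vE mxE.
have [ik | ki | /val_inj ik] := ltngtP i k.
- by move: vi; rewrite E (eqP (implyP (wlt i) ik)) mulr0 => /eqP; rewrite eq_sym oner_eq0.
- move: (eqP (implyP (vlt k) ki)); rewrite E wk mulr1 => c0.
  by move: vi; rewrite E c0 mul0r => /eqP; rewrite eq_sym oner_eq0.
- by move: vi; rewrite ik E wk mulr1 => c1; rewrite vE c1 scale1r.
Qed.

Lemma normalize_exists v : v != 0 -> exists2 c, c != 0 & normalized (c *: v).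
Proof.
move=> vn0; have [i vi] : exists i, v 0 i != 0.
  apply/existsP; apply: contraNT vn0 => /existsPn v0.
  by apply/eqP/rowP => i; rewrite mxE; apply/eqP/negbNE/v0.
have ex : exists n, (n < 5)%N && (v 0 (inord n) != 0) by exists i; rewrite ltn_ord inord_val.
case: (ex_minnP ex) => m /andP[m5 vm] mmin.
exists (v 0 (inord m))^-1; first by rewrite invr_eq0.
apply/existsP; exists (inord m); rewrite mxE mulVf // eqxx /=.
apply/forallP => j; apply/implyP; rewrite inordK // => jm.
rewrite mxE; apply/eqP; have [-> | vj] := eqVneq (v 0 j) 0; first by rewrite mulr0.
by have := mmin j; rewrite ltn_ord inord_val vj => /(_ isT); rewrite leqNgt jm.
Qed.

End Normalized.

Definition qsec (F : finFieldType) (h : 'rV[F]_5) : {set 'rV[F]_5} :=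
  [set v in Q0 F | dot h v == 0].

Definition ovoid_eqn (F : finFieldType) (X : {set 'rV[F]_5}) (h : 'rV[F]_5) :=
  [/\ crd h 0 = 1, X = qsec h & {in X &, forall v w, polar v w = 0 -> v = w}].

Definition tangent_ovoid (F : finFieldType) (h1 g2 x : 'rV[F]_5) : {set 'rV[F]_5} :=
  qsec (h1 + (dot g2 x)^-1 *: polarv x).

Definition bitangent_through (F : finFieldType) (X1 X2 : {set 'rV[F]_5}) (x : 'rV[F]_5)
  (X : {set 'rV[F]_5}) : Prop :=
  [/\ elliptic_ovoid X, x \in X, tangent X X1 & tangent X X2].

Section Ovoids.
Variable F : finFieldType.
Hypothesis F2 : 2%N \in [pchar F].
Implicit Types (X : {set 'rV[F]_5}) (a b h u v w : 'rV[F]_5).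

Lemma in_qsec h v : (v \in qsec h) = [&& normalized v, Qform v == 0 & dot h v == 0].
Proof. by rewrite !inE andbA. Qed.

Lemma ell_frame_ovoid_eqn phi d h : (forall t : F, t ^+ 2 + t + d != 0) ->
  ell_frame phi d -> crd h 0 = 1 -> (forall v, (v <= phi)%MS = (dot h v == 0)) ->
  ovoid_eqn [set v in Q0 F | (v <= phi)%MS] h.
Proof.
move=> d_irr frame h0 phiE; split=> //; first by apply/setP => v; rewrite !inE phiE.
move=> v w; rewrite !inE => /andP[/andP[nv /eqP vS] vphi] /andP[/andP[nw /eqP wS] wphi] vw.
have [c vE] := ell_frame_cap F2 frame d_irr vphi wphi vS wS vw (normalized_neq0 nw).
exact: normalized_scale_eq nv nw vE.
Qed.

Lemma elliptic_ovoid_eqn X : elliptic_ovoid X -> exists h, ovoid_eqn X h.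
Proof.
case=> phi [d [rk d_irr frame ->]].
have [h h0 phiE] := ell_frame_hyperplane F2 frame rk.
by exists h; apply: ell_frame_ovoid_eqn.
Qed.

Lemma qsec2_normalize a b u : u != 0 -> Qform u = 0 -> dot a u = 0 -> dot b u = 0 ->
  exists2 c, c != 0 & c *: u \in qsec a :&: qsec b.
Proof.
move=> un0 uS au bu; have [c c0 cu] := normalize_exists un0; exists c => //.
by rewrite inE !in_qsec cu QformZ uS !dotZr au bu !mulr0 eqxx.
Qed.

Lemma tangent_polar_orth a b r : crd a 0 = 1 -> crd b 0 = 1 ->
  qsec a :&: qsec b = [set r] -> forall v, dot a v = dot b v -> polar r v = 0.
Proof.
move=> a0 b0 rE v abv.
have : r \in qsec a :&: qsec b by rewrite rE set11.
rewrite inE !in_qsec => /andP[/and3P[_ /eqP rS /eqP ar] /and3P[_ _ /eqP br]].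
pose v1 := v - dot a v *: nucleus F.
have av1 : dot a v1 = 0 by rewrite dotBr dotZr dot_nucleus a0 mulr1 subrr.
have bv1 : dot b v1 = 0 by rewrite dotBr dotZr dot_nucleus b0 mulr1 abv subrr.
have -> : polar r v = polar r v1 by rewrite polarBr polarZr polar_nucleus mulr0 subr0.
(* [u] is singular and lies in both solids, so it is a multiple of [r]. *)
pose u := Qform v1 *: r - polar r v1 *: v1.
have uS : Qform u = 0 by rewrite QformB // !QformZ polarZl polarZr rS; ring.
have au : dot a u = 0 by rewrite dotBr !dotZr ar av1; ring.
have bu : dot b u = 0 by rewrite dotBr !dotZr br bv1; ring.
have ru : polar r u = 0.
  have [-> | un0] := eqVneq u 0; first by rewrite -(scale0r 0) polarZr mul0r.
  have [c c0] := qsec2_normalize un0 uS au bu; rewrite rE in_set1 => /eqP cuE.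
  apply/eqP; have := polarvv F2 r; rewrite -{2}cuE polarZr => /eqP.
  by rewrite mulf_eq0 (negbTE c0).
move: ru; rewrite polarBr !polarZr polarvv // mulr0 sub0r => /eqP.
by rewrite oppr_eq0 mulf_eq0 orbb => /eqP.
Qed.

Lemma tangent_hyperplane a b r : crd a 0 = 1 -> crd b 0 = 1 ->
  qsec a :&: qsec b = [set r] ->
  exists2 k, k != 0 & forall v, dot b v = dot a v + k * polar r v.
Proof.
move=> a0 b0 rE.
have [beta rbeta] : exists beta, polarv r = beta *: (b - a).
  apply: dot_ker_scale => v; rewrite dot_polarv dotBl => /eqP; rewrite subr_eq0 => /eqP bav.
  exact: tangent_polar_orth a0 b0 rE v (esym bav).
have : r \in qsec a by have := set11 r; rewrite -rE => /setIP[].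
rewrite in_qsec => /and3P[nr _ /eqP ar].
have beta0 : beta != 0.
  apply: contraTneq (normalized_neq0 nr) => beta0; apply/negPn/eqP.
  apply: radical_in_hyperplane a0 ar _ => v.
  by rewrite -dot_polarv rbeta beta0 scale0r dot0l.
exists beta^-1 => [|v]; first by rewrite invr_eq0.
by rewrite -dot_polarv rbeta dotZl dotBl mulrA mulVf // mul1r addrC subrK.
Qed.

Lemma elliptic_ovoid_transvection phi d W : \rank phi = 4%N ->
  (forall t : F, t ^+ 2 + t + d != 0) -> ell_frame phi d -> Qform W = 1 ->
  elliptic_ovoid [set v in Q0 F | (v *m transvection W <= phi)%MS].
Proof.
move=> rk d_irr frame QW; exists (phi *m transvection W), d; split=> //.
- by rewrite mxrankMfree // row_free_unit transvection_unit.
- by move=> y; rewrite mulmxA Qform_transvection.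
- by apply/setP => v; rewrite !inE submx_transvection.
Qed.

Lemma qsec_polar_tangent X h x c : ovoid_eqn X h -> x \in X -> c != 0 ->
  qsec (h + c *: polarv x) :&: X = [set x].
Proof.
case=> _ XE cap xX c0.
have hcE v : dot (h + c *: polarv x) v = dot h v + c * polar x v.
  by rewrite dotDl dotZl dot_polarv.
apply/setP => v; rewrite in_set1 inE.
apply/andP/eqP => [[] | ->]; last first.
  by move: (xX); rewrite {1}XE !in_qsec hcE polarvv // mulr0 addr0.
rewrite XE !in_qsec hcE => /and3P[_ _ /eqP] + /[dup] vX /and3P[_ _ /eqP hv].
rewrite hv add0r => /eqP; rewrite mulf_eq0 (negbTE c0) => /eqP xv.
by apply/esym/cap => //; rewrite XE in_qsec.
Qed.

Lemma qsec_transport (R : 'M[F]_5) a b a' b' :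
  (forall v, v *m R *m R = v) -> (forall v, Qform (v *m R) = Qform v) ->
  (forall v, dot a' v = dot a (v *m R)) -> (forall v, dot b' v = dot b (v *m R)) ->
  #|qsec a :&: qsec b| = 1%N -> #|qsec a' :&: qsec b'| = 1%N.
Proof.
move=> RK RQ a'E b'E /eqP/cards1P[p pE].
have : p \in qsec a :&: qsec b by rewrite pE set11.
rewrite inE !in_qsec => /andP[/and3P[np /eqP pS /eqP ap] /and3P[_ _ /eqP bp]].
have Rn0 v : v != 0 -> v *m R != 0.
  by move=> vn0; apply: contraNneq vn0 => vR0; rewrite -[v]RK vR0 mul0mx.
have [c c0 cp] : exists2 c, c != 0 & c *: (p *m R) \in qsec a' :&: qsec b'.
  by apply: qsec2_normalize; rewrite ?RQ ?a'E ?b'E ?RK // Rn0 ?normalized_neq0.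
apply/eqP/cards1P; exists (c *: (p *m R)); apply/setP => v; rewrite in_set1.
apply/idP/eqP => [vI | ->] //.
move: cp; rewrite inE !in_qsec => /andP[/and3P[ncp _ _] _].
move: vI; rewrite inE !in_qsec => /andP[/and3P[nv /eqP vS /eqP a'v] /and3P[_ _ /eqP b'v]].
have [c' c'0] : exists2 c', c' != 0 & c' *: (v *m R) \in qsec a :&: qsec b.
  by apply: qsec2_normalize; rewrite ?RQ -?a'E -?b'E // Rn0 ?normalized_neq0.
rewrite pE in_set1 => /eqP c'vp.
apply: (normalized_scale_eq (c := (c * c')^-1)) nv ncp _.
by rewrite -c'vp -scalemxAl RK !scalerA mulVf ?mulf_neq0 ?scale1r.
Qed.

Lemma tangent_ovoid_exists phi d X1 X2 h1 g2 x :
  \rank phi = 4%N -> (forall t : F, t ^+ 2 + t + d != 0) -> ell_frame phi d ->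
  (forall v, (v <= phi)%MS = (dot h1 v == 0)) -> ovoid_eqn X1 h1 -> ovoid_eqn X2 g2 ->
  tangent X1 X2 -> x \in X1 -> x \notin X2 ->
  bitangent_through X1 X2 x (tangent_ovoid h1 g2 x).
Proof.
move=> rk d_irr frame phiE ov1 [g20 X2E _] tan12 xX1 xX2.
have [h10 X1E _] := ov1.
have := xX1; rewrite {1}X1E in_qsec => /and3P[nx /eqP xS /eqP h1x].
set t := dot g2 x.
have t0 : t != 0 by move: xX2; rewrite X2E in_qsec nx xS eqxx.
pose W := nucleus F - t^-1 *: x.
have QW : Qform W = 1.
  by rewrite QformB // Qform_nucleus QformZ xS polarZr polarC polar_nucleus; ring.
have h1W : dot h1 W = 1 by rewrite dotBr dotZr dot_nucleus h10 h1x mulr0 subr0.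
have g2W : dot g2 W = 0 by rewrite dotBr dotZr dot_nucleus g20 mulVf ?subrr.
have XT v : dot (h1 + t^-1 *: polarv x) v = dot h1 (v *m transvection W).
  rewrite mul_transvection dotBr dotZr h1W dotDl dotZl dot_polarv.
  by rewrite polarBr polarZr polar_nucleus polarC; ring.
have g2T v : dot g2 v = dot g2 (v *m transvection W).
  by rewrite mul_transvection dotBr dotZr g2W mulr0 subr0.
rewrite /bitangent_through /tangent_ovoid -/t; set X := qsec _.
have XE : X :&: X1 = [set x] by apply: qsec_polar_tangent; rewrite ?invr_eq0.
split.
- suff -> : X = [set v in Q0 F | (v *m transvection W <= phi)%MS].
    exact: elliptic_ovoid_transvection.
  by apply/setP => v; rewrite !inE phiE XT.
- by have := set11 x; rewrite -XE => /setIP[].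
- by rewrite /tangent XE cards1.
- rewrite /tangent X2E; apply: (qsec_transport (R := transvection W)) => //.
  + exact: transvectionK.
  + exact: Qform_transvection.
  + by rewrite -X1E -X2E.
Qed.

Lemma bitangent_through_eq X1 X2 Y h1 g2 x :
  ovoid_eqn X1 h1 -> ovoid_eqn X2 g2 -> tangent X1 X2 -> x \in X1 -> x \notin X2 ->
  bitangent_through X1 X2 x Y -> Y = tangent_ovoid h1 g2 x.
Proof.
case=> h10 X1E cap1 [g20 X2E _] tan12 xX1 xX2 [/elliptic_ovoid_eqn[hY [hY0 YE _]] xY tanY1 tanY2].
have [p pE] : exists p, qsec h1 :&: qsec g2 = [set p].
  by apply/cards1P; rewrite -X1E -X2E tan12.
have [r rE] : exists r, qsec h1 :&: qsec hY = [set r].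
  by apply/cards1P; rewrite -X1E -YE setIC tanY1.
have [r' r'E] : exists r', qsec g2 :&: qsec hY = [set r'].
  by apply/cards1P; rewrite -X2E -YE setIC tanY2.
have [k k0 hk] := tangent_hyperplane h10 hY0 rE.
have [k' _ hk'] := tangent_hyperplane g20 hY0 r'E.
have [m _ hm] := tangent_hyperplane h10 g20 pE.
have /setIP[_ pX2] : p \in qsec h1 :&: qsec g2 by rewrite pE set11.
have /setIP[rX1 _] : r \in qsec h1 :&: qsec hY by rewrite rE set11.
have /setIP[r'X2 _] : r' \in qsec g2 :&: qsec hY by rewrite r'E set11.
move: pX2 r'X2 (xX1) xY; rewrite X1E YE !in_qsec.
move=> /and3P[_ /eqP pS /eqP g2p] /and3P[_ /eqP r'S /eqP g2r'].
move=> /and3P[nx /eqP xS /eqP h1x] /and3P[_ _ /eqP hYx].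
set t := dot g2 x.
have t0 : t != 0 by move: xX2; rewrite X2E in_qsec nx xS eqxx.
have rx : r = x.
  apply: (cap1 r x) => //; first by rewrite X1E.
  by move: hYx; rewrite hk h1x add0r => /eqP; rewrite mulf_eq0 (negbTE k0) => /eqP.
subst r.
have zrad v : polar (k *: x - m *: p - k' *: r') v = 0.
  have := hk v; rewrite hk' hm -addrA => /addrI e.
  by rewrite !polarBl !polarZl -e; ring.
have tE : t = m * polar p x by rewrite /t hm h1x add0r.
have kt : k * t = 1.
  exact (radical_comb_eq1 F2 g20 xS pS r'S g2p g2r' zrad (mulf_neq0 k0 t0) tE).
have tk : t^-1 = k by apply: (mulIf t0); rewrite mulVf // kt.
by rewrite /tangent_ovoid -/t tk; apply/setP => v; rewrite !in_qsec hk dotDl dotZl dot_polarv.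
Qed.

End Ovoids.

Theorem mainTheorem4 (F : finFieldType) (char2 : (2%N \in [pchar F]))
  (X1 X2 : {set 'rV[F]_5}) (x : 'rV[F]_5) :
  elliptic_ovoid X1 -> elliptic_ovoid X2 -> tangent X1 X2 ->
  x \in X1 -> x \notin X2 ->
  exists! X : {set 'rV[F]_5},
    [/\ elliptic_ovoid X, x \in X, tangent X X1 & tangent X X2].
Proof.
move=> ov1 ov2 tan12 xX1 xX2.
have [phi [d [rk d_irr frame X1E]]] := ov1.
have [h1 h10 phiE] := ell_frame_hyperplane char2 frame rk.
have eq1 : ovoid_eqn X1 h1 by rewrite X1E; apply: ell_frame_ovoid_eqn.
have [g2 eq2] := elliptic_ovoid_eqn char2 ov2.
exists (tangent_ovoid h1 g2 x); split.
  exact (tangent_ovoid_exists char2 rk d_irr frame phiE eq1 eq2 tan12 xX1 xX2).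
by move=> Y /(bitangent_through_eq char2 eq1 eq2 tan12 xX1 xX2) ->.
Qed.
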